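(* Under the setting in the context, assume $\sigma_A>0$ and $S^2\ge M_iR_i/p_i^2$ for all $i$. Choose, for all $t$, $\alpha_t=\beta_t=\rho$ with $\rho=\sqrt{\sigma_A}\,S^{-1}$, and $A_t=\sigma_A^{-1}B_t=(1-\rho)^{-t}$ (so $A_0=1$, $B_0=\sigma_A$). Then the condition $1-\frac{\alpha_tR_i}{p_i}\ge0$ holds for all $i,t$, and the generalized APCG iterates satisfy $$\sigma_A\,\mathbb{E}\big[\|v_t-\theta^\star\|^2_{A^\dagger A}\big]+2\big[\mathbb{E}[F(x_t)]-F(\theta^\star)\big]\le C_0(1-\rho)^t,$$ with $C_0=B_0\|v_0-\theta^\star\|^2+2A_0[F(x_0)-F(\theta^\star)]$.
   Context: Setting. Minimize $F(x)=f_A(x)+\sum_{i=1}^d\psi_i(x^{(i)})$ over $\mathbb{R}^d$; $\theta^\star$ a minimizer. $A$ is a matrix with $d$ columns, $A^\dagger$ its pseudo-inverse, $\|u\|^2_{A^\dagger A}=u^TA^\dagger Au$, $e_i$ unit vectors, $x^{(i)}=e_i^Tx$, $R_i=e_i^TA^\dagger Ae_i$. Each $\psi_i$ is convex; $f_A$ is differentiable with $f_A(x)-f_A(y)\ge\nabla f_A(y)^TA^\dagger A(x-y)+\frac{\sigma_A}{2}(x-y)^TA^\dagger A(x-y)$ for all $x,y$; $\nabla_if_A=e_ie_i^T\nabla f_A$; $f_A$ is $M_i$-smooth in direction $i$; for every $i$ either $R_i=1$ or $\psi_i=0$; sampling probabilities $p_i>0$ sum to $1$. Generalized APCG with sequences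 $(\alpha_t,\beta_t,A_t,B_t)$, $a_{t+1}=A_{t+1}-A_t$, $\eta_{i,t}=\frac{a_{t+1}}{B_{t+1}p_i}$: $x_0=v_0=0$; for each $t$: $y_t=\frac{(1-\alpha_t)x_t+\alpha_t(1-\beta_t)v_t}{1-\alpha_t\beta_t}$; sample $i$ w.p. $p_i$ independently; $z_{t+1}=v_{t+1}=(1-\beta_t)v_t+\beta_ty_t-\eta_{i,t}\nabla_if_A(y_t)$; replace $v_{t+1}^{(i)}={\rm prox}_{\eta_{i,t}\psi_i}(z_{t+1}^{(i)})$ where ${\rm prox}_{\eta\psi}(x)=\arg\min_v\frac{1}{2\eta}\|v-x\|^2+\psi(v)$; $x_{t+1}=y_t+\frac{\alpha_tR_i}{p_i}(v_{t+1}-(1-\beta_t)v_t-\beta_ty_t)$. *)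

From HB Require Import structures.
From mathcomp Require Import all_boot all_order all_algebra.
From mathcomp Require Import all_classical all_reals all_analysis.
Set Implicit Arguments. Unset Strict Implicit. Unset Printing Implicit Defensive.
Import Order.TTheory GRing.Theory Num.Theory.
Import numFieldNormedType.Exports.
Local Open Scope ring_scope.

Definition is_pinv (R : realType) (m d : nat) (A : 'M[R]_(m, d)) (X : 'M[R]_(d, m)) : Prop :=
  [/\ A *m X *m A = A, X *m A *m X = X, (A *m X)^T = A *m X & (X *m A)^T = X *m A].

Definition evec (R : realType) (d : nat) (i : 'I_d) : 'cV[R]_d := delta_mx i 0.

Definition sqnormP (R : realType) (d : nat) (P : 'M[R]_d) (u : 'cV[R]_d) : R :=
  (u^T *m P *m u) 0 0.

Definition sqnorm (R : realType) (d : nat) (u : 'cV[R]_d) : R := (u^T *m u) 0 0.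

Definition Rdiag (R : realType) (d : nat) (P : 'M[R]_d) (i : 'I_d) : R :=
  ((evec R i)^T *m P *m evec R i) 0 0.

Definition coord_grad (R : realType) (d : nat) (g : 'cV[R]_d -> 'cV[R]_d)
  (i : 'I_d) (y : 'cV[R]_d) : 'cV[R]_d :=
  evec R i *m (evec R i)^T *m g y.

Definition convex_fun (R : realType) (psi : R -> R) : Prop :=
  forall (a b l : R), 0 <= l <= 1 ->
    psi (l * a + (1 - l) * b) <= l * psi a + (1 - l) * psi b.

Definition is_prox (R : realType) (eta : R) (psi : R -> R) (z v : R) : Prop :=
  forall w : R, (v - z) ^+ 2 / (2 * eta) + psi v <= (w - z) ^+ 2 / (2 * eta) + psi w.

Definition Fobj (R : realType) (d : nat) (f : 'cV[R]_d -> R) (psi : 'I_d -> R -> R)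
  (x : 'cV[R]_d) : R :=
  f x + \sum_(i < d) psi i (x i 0).

(* The iterates are indexed by the history of sampled
   coordinates h = [:: i_0; ...; i_{t-1}] (t = size h); appending the index
   i_t sampled at step t gives the history of length t+1. *)
Definition apcg_iterates (R : realType) (d : nat)
  (alpha beta As Bs : nat -> R) (p : 'I_d -> R) (P : 'M[R]_d)
  (g : 'cV[R]_d -> 'cV[R]_d) (psi : 'I_d -> R -> R)
  (x v : seq 'I_d -> 'cV[R]_d) : Prop :=
  x [::] = 0 /\ v [::] = 0 /\
  forall (h : seq 'I_d) (i : 'I_d),
    let t := size h in
    let y := (1 - alpha t * beta t)^-1 *:
               ((1 - alpha t) *: x h + (alpha t * (1 - beta t)) *: v h) in
    let eta := (As t.+1 - As t) / (Bs t.+1 * p i) in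
    let z := (1 - beta t) *: v h + beta t *: y - eta *: coord_grad g i y in
    [/\ is_prox eta (psi i) (z i 0) (v (rcons h i) i 0),
        (forall j : 'I_d, j != i -> v (rcons h i) j 0 = z j 0) &
        x (rcons h i) = y + (alpha t * Rdiag P i / p i) *:
                            (v (rcons h i) - (1 - beta t) *: v h - beta t *: y)].

(* Expectation after t steps of a quantity X depending on the history, the
   indices being i.i.d. with P(i) = p i. *)
Definition Exp (R : realType) (d : nat) (p : 'I_d -> R) (t : nat)
  (X : seq 'I_d -> R) : R :=
  \sum_(h : t.-tuple 'I_d) (\prod_(i <- h) p i) * X h.

(* The quantity
     Phi h = sigma ||v h - theta||^2_{A^+A} + 2 (f (x h) + sum_j psi_hat h j - F theta)
   is a Lyapunov function of the iteration: averaged over the next sampled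
   coordinate it contracts by (1 - rho).  Here psi_hat h j dominates
   psi_j (x h j) since, on a coordinate with R_j = 1, x h j is a convex
   combination of the past v's (on the other coordinates psi_j = 0).  The
   contraction combines the optimality condition of the proximal step, the
   coordinate descent lemma f (y + s e_i) <= f y + s grad_i f y + M_i s^2 / 2,
   whose curvature term is absorbed thanks to S^2 >= M_i R_i / p_i^2, and
   strong convexity of f at y_t towards x_t and towards theta.  Finally
   Phi [::] <= C_0 and Phi dominates the quantity to be bounded. *)

From mathcomp Require Import all_boot all_order all_algebra.
From mathcomp Require Import all_classical all_reals all_analysis.
From mathcomp Require Import ring lra.
Import Order.TTheory GRing.Theory Num.Theory.
Import numFieldNormedType.Exports.
Set Implicit Arguments. Unset Strict Implicit. Unset Printing Implicit Defensive.
Local Open Scope ring_scope.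

Section Expectation.
Variables (R : realType) (d : nat) (p : 'I_d -> R).

Lemma Exp0 (X : seq 'I_d -> R) : Exp p 0 X = X [::].
Proof.
rewrite /Exp (big_pred1 [tuple]) => [|h]; last exact/esym/eqP/tuple0.
by rewrite big_nil mul1r.
Qed.

Lemma ExpS (t : nat) (X : seq 'I_d -> R) :
  Exp p t.+1 X = \sum_(i < d) p i * Exp p t (fun h => X (i :: h)).
Proof.
rewrite /Exp.
have -> : \sum_(i < d) p i * (\sum_(h : t.-tuple 'I_d) (\prod_(j <- h) p j) * X (i :: h))
   = \sum_(q : 'I_d * t.-tuple 'I_d) (\prod_(j <- [tuple of q.1 :: q.2]) p j) * X (q.1 :: q.2).
  rewrite -(pair_bigA _ (fun i (h : t.-tuple 'I_d) =>
    (\prod_(j <- [tuple of i :: h]) p j) * X (i :: h))).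
  apply: eq_bigr => i _; rewrite big_distrr /=; apply: eq_bigr => h _.
  by rewrite big_cons mulrA.
rewrite (reindex (fun q : 'I_d * t.-tuple 'I_d => [tuple of q.1 :: q.2])) //=.
exists (fun s : t.+1.-tuple 'I_d => (thead s, [tuple of behead s])).
  by move=> [i h] _ /=; rewrite theadE; congr pair; apply: val_inj.
by move=> s _ /=; rewrite [RHS]tuple_eta.
Qed.

Hypothesis p_ge0 : forall i, 0 <= p i.

Lemma ler_Exp (t : nat) (X Y : seq 'I_d -> R) :
  (forall h, X h <= Y h) -> Exp p t X <= Exp p t Y.
Proof.
move=> XY; apply: ler_sum => h _; apply: ler_wpM2l; last exact: XY.
exact: prodr_ge0.
Qed.

Lemma Exp_contraction (c : R) (Phi : seq 'I_d -> R) :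
  0 <= c -> (forall h, \sum_(i < d) p i * Phi (rcons h i) <= c * Phi h) ->
  forall t, Exp p t Phi <= c ^+ t * Phi [::].
Proof.
move=> c0 step t.
suff gen : forall h0, Exp p t (fun h => Phi (h0 ++ h)) <= c ^+ t * Phi h0 by exact: (gen [::]).
elim: t => [|t IH] h0; first by rewrite Exp0 cats0 expr0 mul1r.
rewrite ExpS.
have cons_rcons i : Exp p t (fun h => Phi (h0 ++ i :: h))
    = Exp p t (fun h => Phi (rcons h0 i ++ h)).
  by congr Exp; apply: funext => h; rewrite cat_rcons.
under eq_bigr do rewrite cons_rcons.
apply: le_trans (_ : \sum_i p i * (c ^+ t * Phi (rcons h0 i)) <= _).
  by apply: ler_sum => i _; exact: ler_wpM2l.
under eq_bigr do rewrite mulrCA.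
by rewrite -big_distrr /= exprSr -mulrA ler_wpM2l // exprn_ge0.
Qed.

Hypothesis p_sum1 : \sum_(i < d) p i = 1.

Lemma Exp_affine (t : nat) (a b c : R) (X Y : seq 'I_d -> R) :
  Exp p t (fun h => a * X h + b * Y h + c) = a * Exp p t X + b * Exp p t Y + c.
Proof.
elim: t X Y => [|t IH] X Y; first by rewrite !Exp0.
rewrite !ExpS !big_distrr -[c in RHS]mul1r -p_sum1 big_distrl -!big_split /=.
by apply: eq_bigr => i _; rewrite IH; ring.
Qed.

End Expectation.

Section Coordinates.
Variables (R : realType) (d : nat).

Lemma evecE (i j : 'I_d) : evec R i j 0 = (j == i)%:R.
Proof. by rewrite /evec mxE andbT. Qed.

Lemma tr_evec_mulmx n (i : 'I_d) (N : 'M[R]_(d, n)) k : ((evec R i)^T *m N) 0 k = N i k.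
Proof. by rewrite /evec trmx_delta -rowE mxE. Qed.

Lemma mulmx_evec n (i : 'I_d) (N : 'M[R]_(n, d)) k : (N *m evec R i) k 0 = N k i.
Proof. by rewrite /evec -colE mxE. Qed.

Lemma add_evecE (b : 'cV[R]_d) (c : R) (i j : 'I_d) :
  (b + c *: evec R i) j 0 = b j 0 + c * (j == i)%:R.
Proof. by rewrite [LHS]mxE [X in _ + X]mxE evecE. Qed.

Lemma RdiagE (P : 'M[R]_d) i : Rdiag P i = P i i.
Proof. by rewrite /Rdiag -mulmxA tr_evec_mulmx mulmx_evec. Qed.

Lemma coord_gradE (g : 'cV[R]_d -> 'cV[R]_d) i y j :
  coord_grad g i y j 0 = (j == i)%:R * g y i 0.
Proof.
by rewrite /coord_grad -mulmxA [LHS]mxE big_ord1 evecE (@tr_evec_mulmx 1).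
Qed.

Lemma mulmx_comb3_entry (G : 'rV[R]_d) (a b c : 'cV[R]_d) (s1 s2 s3 : R) :
  (G *m (s1 *: a + s2 *: b + s3 *: c)) 0 0
  = s1 * (G *m a) 0 0 + s2 * (G *m b) 0 0 + s3 * (G *m c) 0 0.
Proof. by rewrite !mulmxDr -!scalemxAr !mxE. Qed.

Lemma trmx_mulmx_entry (u w : 'cV[R]_d) : (u^T *m w) 0 0 = \sum_k u k 0 * w k 0.
Proof. by rewrite mxE; apply: eq_bigr => k _; rewrite mxE. Qed.

End Coordinates.

Section OrthogonalProjection.
Variables (R : realType) (d : nat) (P : 'M[R]_d).

Lemma sqnormPN (u : 'cV[R]_d) : sqnormP P (- u) = sqnormP P u.
Proof. by rewrite /sqnormP (raddfN (@trmx R d 1)) mulNmx mulmxN mulNmx opprK. Qed.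

Lemma trmx_mulmx_ker (z u : 'cV[R]_d) : P *m u = 0 -> (z^T *m P *m u) 0 0 = 0.
Proof. by rewrite -mulmxA => ->; rewrite mulmx0 mxE. Qed.

Hypotheses (P_sym : P^T = P) (P_idem : P *m P = P).

Lemma sqnormP_sumE (u : 'cV[R]_d) : sqnormP P u = \sum_k ((P *m u) k 0) ^+ 2.
Proof.
have -> : sqnormP P u = ((P *m u)^T *m (P *m u)) 0 0.
  by rewrite /sqnormP trmx_mul P_sym mulmxA -(mulmxA u^T P P) P_idem.
by rewrite mxE; apply: eq_bigr => k _; rewrite mxE expr2.
Qed.

Lemma sqnormP_ge0 (u : 'cV[R]_d) : 0 <= sqnormP P u.
Proof. by rewrite sqnormP_sumE; apply: sumr_ge0 => k _; apply: sqr_ge0. Qed.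

Lemma sqnormP_convex (a b : 'cV[R]_d) (r : R) : 0 <= r <= 1 ->
  sqnormP P ((1 - r) *: a + r *: b) <= (1 - r) * sqnormP P a + r * sqnormP P b.
Proof.
move=> /andP[r0 r1]; rewrite !sqnormP_sumE !big_distrr -big_split /=.
apply: ler_sum => k _.
have -> : (P *m ((1 - r) *: a + r *: b)) k 0 = (1 - r) * (P *m a) k 0 + r * (P *m b) k 0.
  by rewrite mulmxDr -!scalemxAr !mxE.
set A := (P *m a) k 0; set B := (P *m b) k 0.
have : 0 <= r * (1 - r) * (A - B) ^+ 2 by rewrite mulr_ge0 ?sqr_ge0 ?mulr_ge0 ?subr_ge0.
nra.
Qed.

Lemma trmx_mulmx_fixed (g : 'cV[R]_d) : P *m g = g -> g^T *m P = g^T.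
Proof. by move=> Pg; rewrite -{1}P_sym -trmx_mul Pg. Qed.

Lemma proj_col_sq i : \sum_k P k i ^+ 2 = P i i.
Proof.
have := congr1 (fun N : 'M[R]_d => N i i) P_idem; rewrite mxE => <-.
apply: eq_bigr => k _.
by have := congr1 (fun N : 'M[R]_d => N k i) P_sym; rewrite mxE => <-; rewrite expr2.
Qed.

Lemma sqnormP_add_evec (a : 'cV[R]_d) (s : R) i :
  sqnormP P (a + s *: evec R i) = sqnormP P a + 2 * s * (P *m a) i 0 + s ^+ 2 * P i i.
Proof.
have Pa_i : \sum_k (P *m a) k 0 * P k i = (P *m a) i 0.
  have -> : (P *m a) i 0 = ((P *m P) *m a) i 0 by rewrite P_idem.
  rewrite -mulmxA mxE; apply: eq_bigr => k _.
  by have := congr1 (fun N : 'M[R]_d => N k i) P_sym; rewrite mxE mulrC => ->.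
rewrite !sqnormP_sumE -Pa_i -proj_col_sq !big_distrr -!big_split /=.
apply: eq_bigr => k _.
rewrite mulmxDr -scalemxAr -(mulmx_evec i P k) [in LHS]mxE [X in _ + X]mxE.
ring.
Qed.

Lemma proj_diag_ge0 i : 0 <= P i i.
Proof. by rewrite -proj_col_sq; apply: sumr_ge0 => k _; apply: sqr_ge0. Qed.

Lemma proj_diag1_mulmx i (u : 'cV[R]_d) : P i i = 1 -> (P *m u) i 0 = u i 0.
Proof.
move=> Pii.
have offdiag0 k : k != i -> P i k = 0.
  move=> ki; have : \sum_(l | l != i) P l i ^+ 2 = 0.
    by move: (proj_col_sq i); rewrite (bigD1 i) //= Pii expr1n; lra.
  move/eqP; rewrite psumr_eq0 => [|l _]; last exact: sqr_ge0.
  move=> /allP /(_ k (mem_index_enum k)); rewrite ki /= sqrf_eq0 => /eqP Pki.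
  by have := congr1 (fun N : 'M[R]_d => N i k) P_sym; rewrite mxE Pki.
rewrite mxE (bigD1 i) //= Pii mul1r big1 ?addr0 // => k ki.
by rewrite offdiag0 // mul0r.
Qed.

End OrthogonalProjection.

Lemma sqnormP_le_sqnorm (R : realType) (d : nat) (P : 'M[R]_d) (u : 'cV[R]_d) :
  P^T = P -> P *m P = P -> sqnormP P u <= sqnorm u.
Proof.
move=> P_sym P_idem.
have Q_sym : (1%:M - P)^T = 1%:M - P by rewrite linearB /= trmx1 P_sym.
have Q_idem : (1%:M - P) *m (1%:M - P) = 1%:M - P.
  by rewrite mulmxBl mul1mx mulmxBr mulmx1 P_idem subrr subr0.
have := sqnormP_ge0 Q_sym Q_idem u.
rewrite /sqnormP /sqnorm mulmxBr mulmx1 mulmxBl [X in 0 <= X]mxE [X in _ + X]mxE.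
by rewrite subr_ge0.
Qed.

Lemma le0_of_le_divn (R : realType) (a c : R) :
  (forall n : nat, (0 < n)%N -> a <= c / n%:R) -> a <= 0.
Proof.
move=> le_a; rewrite leNgt; apply/negP => a_gt0.
have c_ge0 : 0 <= c by have := le_a 1%N isT; rewrite divr1; lra.
set n := (Num.bound (c / a)).+1.
have lt_n : c / a < n%:R.
  apply: lt_le_trans (archi_boundP _) _; first by apply: divr_ge0 => //; apply: ltW.
  by rewrite ler_nat.
have n_gt0 : 0 < n%:R :> R by rewrite ltr0n.
have := le_a n isT; rewrite ler_pdivlMr //.
move: lt_n; rewrite ltr_pdivrMr //; nra.
Qed.

Section StronglyConvexFunction.
Variables (R : realType) (d : nat) (P : 'M[R]_d).
Variables (f : 'cV[R]_d -> R) (g : 'cV[R]_d -> 'cV[R]_d) (sigma : R).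
Hypotheses (P_sym : P^T = P) (P_idem : P *m P = P).
Hypothesis f_strong : forall x1 y1 : 'cV[R]_d,
  f x1 - f y1 >= ((g y1)^T *m P *m (x1 - y1)) 0 0 + sigma / 2 * sqnormP P (x1 - y1).

(* [f] is constant along [ker P], so its gradient [g] is orthogonal to it. *)
Lemma grad_in_range :
  (forall y : 'cV[R]_d, differentiable f y /\
     forall u : 'cV[R]_d, 'd f y u = ((g y)^T *m u) 0 0) ->
  forall y, P *m g y = g y.
Proof.
move=> f_diff y; set u := g y - P *m g y.
have Pu : P *m u = 0 by rewrite /u mulmxBr mulmxA P_idem subrr.
have Pcu c : P *m (c *: u) = 0 by rewrite -scalemxAr Pu scaler0.
have f_cst c : f (y + c *: u) = f y.
  have := f_strong (y + c *: u) y; have := f_strong y (y + c *: u).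
  rewrite addrAC subrr add0r opprD addrA subrr add0r -scaleNr.
  rewrite !trmx_mulmx_ker // /sqnormP !trmx_mulmx_ker // mulr0 addr0; lra.
have grad_u : ((g y)^T *m u) 0 0 = 0.
  have [_ <-] := f_diff y; rewrite -deriveE; last by case: (f_diff y).
  apply/lim_near_cst => //=; near=> c.
  by rewrite /= (addrC (c *: u)) f_cst subrr scaler0.
have : \sum_k u k 0 ^+ 2 = 0.
  have -> : \sum_k u k 0 ^+ 2 = (u^T *m u) 0 0.
    by rewrite [RHS]mxE; apply: eq_bigr => k _; rewrite expr2 [u^T 0 k]mxE.
  have -> : u^T = (g y)^T - (g y)^T *m P by rewrite /u linearB /= trmx_mul P_sym.
  rewrite mulmxBl -mulmxA Pu mulmx0 subr0.
  exact: grad_u.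
move/eqP; rewrite psumr_eq0 => [|k _]; last exact: sqr_ge0.
move=> /allP u0; apply/eqP; rewrite eq_sym -subr_eq0; apply/eqP/matrixP => k l.
rewrite (ord1 l) [RHS]mxE; apply/eqP.
by have := u0 k (mem_index_enum k); rewrite sqrf_eq0.
Unshelve. all: by end_near.
Qed.

Hypothesis g_range : forall y, P *m g y = g y.

Lemma coord_strong_convexity (a : 'cV[R]_d) (s : R) i :
  s * g a i 0 + sigma / 2 * (s ^+ 2 * P i i) <= f (a + s *: evec R i) - f a.
Proof.
apply: le_trans (f_strong _ _); rewrite addrAC subrr add0r.
rewrite -(add0r (s *: evec R i)) sqnormP_add_evec // mulmx0.
rewrite (_ : sqnormP P 0 = 0); last by rewrite /sqnormP mulmx0 mxE.
by rewrite trmx_mulmx_fixed // add0r -scalemxAr mxE mulmx_evec !mxE mulr0 !add0r.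
Qed.

Hypothesis sigma_ge0 : 0 <= sigma.

Lemma coord_convexity (a : 'cV[R]_d) (s : R) i :
  f (a + s *: evec R i) - f a <= s * g (a + s *: evec R i) i 0.
Proof.
have := coord_strong_convexity (a + s *: evec R i) (- s) i.
rewrite -addrA -scalerDl addrN scale0r addr0.
have : 0 <= sigma / 2 * ((- s) ^+ 2 * P i i).
  by rewrite mulr_ge0 ?divr_ge0 // mulr_ge0 ?sqr_ge0 // proj_diag_ge0.
lra.
Qed.

Variable M : 'I_d -> R.
Hypothesis g_lip : forall (i : 'I_d) (y : 'cV[R]_d) (s : R),
  `|(g (y + s *: evec R i)) i 0 - (g y) i 0| <= M i * `|s|.

Lemma sigma_diag_le_lip i : sigma * P i i <= M i.
Proof.
have up := coord_strong_convexity 0 1 i.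
have down := coord_strong_convexity (0 + 1 *: evec R i) (-1) i.
rewrite -addrA -scalerDl addrN scale0r addr0 in down.
have lip := g_lip i 0 1; rewrite normr1 mulr1 in lip.
have := ler_norm (g (0 + 1 *: evec R i) i 0 - g 0 i 0).
move: up down lip; set G1 := g (0 + _) i 0; set G0 := g 0 i 0.
set F1 := f _; set F0 := f 0; clearbody G1 G0 F1 F0; nra.
Qed.

Lemma coord_walk i (y : 'cV[R]_d) (h : R) (n : nat) :
  f (y + (n%:R * h) *: evec R i) - f y
  <= n%:R * h * g y i 0 + M i * h ^+ 2 * (n%:R * n.+1%:R / 2).
Proof.
elim: n => [|n IH]; first by rewrite !mul0r scale0r addr0 subrr mulr0.
have e : y + (n%:R * h) *: evec R i + h *: evec R i = y + (n.+1%:R * h) *: evec R i.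
  by rewrite -addrA -scalerDl mulrSr mulrDl mul1r.
have conv := coord_convexity (y + (n%:R * h) *: evec R i) h i; rewrite e in conv.
have lip : h * g (y + (n.+1%:R * h) *: evec R i) i 0
    <= h * g y i 0 + M i * h ^+ 2 * n.+1%:R.
  have : h * (g (y + (n.+1%:R * h) *: evec R i) i 0 - g y i 0)
      <= `|h| * (M i * `|n.+1%:R * h|).
    by apply: le_trans (ler_norm _) _; rewrite normrM; apply: ler_wpM2l.
  have -> : `|h| * (M i * `|n.+1%:R * h|) = M i * h ^+ 2 * n.+1%:R.
    rewrite normrM (ger0_norm (ler0n _ _)) -[h ^+ 2]ger0_norm ?sqr_ge0 //.
    by rewrite normrX; ring.
  lra.
have eS k : k.+1%:R = k%:R + 1 :> R by rewrite mulrSr.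
move: IH conv lip; rewrite !(eS n.+1) !(eS n); set N := n%:R.
have -> : M i * h ^+ 2 * ((N + 1) * (N + 1 + 1) / 2)
    = M i * h ^+ 2 * (N * (N + 1) / 2) + M i * h ^+ 2 * (N + 1) by field.
lra.
Qed.

(* Walk from [y] to [y + s e_i] in [n] equal steps and let [n] grow. *)
Lemma coord_descent i (y : 'cV[R]_d) (s : R) :
  f (y + s *: evec R i) <= f y + s * g y i 0 + M i * s ^+ 2 / 2.
Proof.
suff : f (y + s *: evec R i) - (f y + s * g y i 0 + M i * s ^+ 2 / 2) <= 0 by lra.
apply: (@le0_of_le_divn _ _ (M i * s ^+ 2 / 2)) => n n_gt0.
have n_neq0 : (n%:R : R) != 0 by rewrite pnatr_eq0 -lt0n.
have := coord_walk i y (s / n%:R) n; rewrite mulrC divfK //.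
have -> : M i * (s / n%:R) ^+ 2 * (n%:R * n.+1%:R / 2)
    = M i * s ^+ 2 / 2 + M i * s ^+ 2 / 2 / n%:R by rewrite -addn1 natrD; field.
lra.
Qed.

End StronglyConvexFunction.

Section Prox.
Variables (R : realType) (eta : R) (z v : R).
Hypothesis eta_gt0 : 0 < eta.

(* Compare [v] with the convex combinations [v + (u - v) / n] and let [n] grow. *)
Lemma prox_optimality (psi : R -> R) : convex_fun psi -> is_prox eta psi z v ->
  forall u, psi v <= psi u + (u - v) * (v - z) / eta.
Proof.
move=> psi_cvx v_min u.
suff : psi v - psi u - (u - v) * (v - z) / eta <= 0 by lra.
apply: (@le0_of_le_divn _ _ ((u - v) ^+ 2 / (2 * eta))) => n n_gt0.
have n_gt0' : 0 < n%:R :> R by rewrite ltr0n.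
set l := n%:R^-1.
have l_gt0 : 0 < l by rewrite invr_gt0.
have l_le1 : l <= 1 by rewrite invf_le1 // ler1n.
have cvx := psi_cvx u v l; rewrite (ltW l_gt0) l_le1 in cvx; have {}cvx := cvx isT.
have opt := v_min (l * u + (1 - l) * v).
have e : (l * u + (1 - l) * v - z) ^+ 2 / (2 * eta) - (v - z) ^+ 2 / (2 * eta)
    = l * ((u - v) * (v - z) / eta) + l * (l * ((u - v) ^+ 2 / (2 * eta))).
  by field; rewrite gt_eqF.
have : l * psi v <= l * (psi u + (u - v) * (v - z) / eta + l * ((u - v) ^+ 2 / (2 * eta))).
  move: opt cvx e; clearbody l; clear -R.
  set W := psi (_ + _); set Q0 := (v - z) ^+ 2 / _; set Q1 := (_ - z) ^+ 2 / _.
  set A := (u - v) * _ / _; set B := _ ^+ 2 / _; set pu := psi u; set pv := psi v.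
  clearbody W Q1 Q0 A B pu pv; nra.
rewrite ler_pM2l // (mulrC l).
move: (_ * (v - z) / eta) (_ ^+ 2 / _ * l) => A B; lra.
Qed.

Lemma prox0_eq : is_prox eta (fun _ => 0) z v -> v = z.
Proof.
move=> v_min; have := v_min z; rewrite subrr expr0n /= !mul0r !addr0.
have eta2_gt0 : 0 < 2 * eta by rewrite mulr_gt0.
rewrite ler_pdivrMr // mul0r.
move=> sq_le0; have : (v - z) ^+ 2 = 0 by apply/le_anti; rewrite sq_le0 sqr_ge0.
by move/eqP; rewrite sqrf_eq0 subr_eq0 => /eqP.
Qed.

End Prox.

Section ConstantStepAPCG.
Variables (R : realType) (d : nat) (P : 'M[R]_d).
Variables (f : 'cV[R]_d -> R) (g : 'cV[R]_d -> 'cV[R]_d) (psi : 'I_d -> R -> R).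
Variables (sigma rho : R) (M p : 'I_d -> R) (theta : 'cV[R]_d).
Variables (x v : seq 'I_d -> 'cV[R]_d).

Hypotheses (P_sym : P^T = P) (P_idem : P *m P = P).
Hypothesis psi_convex : forall i, convex_fun (psi i).
Hypothesis f_strong : forall x1 y1 : 'cV[R]_d,
  f x1 - f y1 >= ((g y1)^T *m P *m (x1 - y1)) 0 0 + sigma / 2 * sqnormP P (x1 - y1).
Hypothesis g_range : forall y, P *m g y = g y.
Hypothesis g_lip : forall (i : 'I_d) (y : 'cV[R]_d) (s : R),
  `|(g (y + s *: evec R i)) i 0 - (g y) i 0| <= M i * `|s|.
Hypothesis diag1_or_psi0 : forall i, P i i = 1 \/ psi i = (fun _ => 0).
Hypotheses (p_gt0 : forall i, 0 < p i) (p_sum1 : \sum_(i < d) p i = 1).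
Hypotheses (sigma_gt0 : 0 < sigma) (rho_gt0 : 0 < rho) (rho_lt1 : rho < 1).
Hypothesis rho_bound : forall i, rho ^+ 2 * (M i * P i i) <= sigma * p i ^+ 2.

Let rho01 : 0 <= rho <= 1. Proof. by rewrite !ltW. Qed.
Let rho1_gt0 : 0 < 1 - rho. Proof. by rewrite subr_gt0. Qed.

Definition apcg_y h := (1 + rho)^-1 *: (x h + rho *: v h).
Definition apcg_w h := (1 - rho) *: v h + rho *: apcg_y h.
Definition apcg_eta i := rho / (sigma * p i).

Hypotheses (x_nil : x [::] = 0) (v_nil : v [::] = 0).
Hypothesis v_prox : forall h i, is_prox (apcg_eta i) (psi i)
  (apcg_w h i 0 - apcg_eta i * g (apcg_y h) i 0) (v (rcons h i) i 0).
Hypothesis v_other : forall h i j, j != i -> v (rcons h i) j 0 = apcg_w h j 0.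

Definition apcg_delta h i := v (rcons h i) i 0 - apcg_w h i 0.

Hypothesis x_step : forall h i,
  x (rcons h i) = apcg_y h + (rho * P i i / p i) *: (v (rcons h i) - apcg_w h).

Lemma rho_diag_le_p i : rho * P i i <= p i.
Proof.
have P_ge0 := proj_diag_ge0 P_sym P_idem i.
have : (rho * P i i) ^+ 2 <= p i ^+ 2.
  have key := ler_wpM2l (mulr_ge0 (sqr_ge0 rho) P_ge0)
    (sigma_diag_le_lip P_sym P_idem f_strong g_range g_lip i).
  have e1 : sigma * (rho * P i i) ^+ 2 = rho ^+ 2 * P i i * (sigma * P i i) by ring.
  have e2 : rho ^+ 2 * (M i * P i i) = rho ^+ 2 * P i i * M i by ring.
  by rewrite -(ler_pM2l sigma_gt0) e1; apply: le_trans key _; rewrite -e2.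
have := mulr_ge0 (ltW rho_gt0) P_ge0.
have := p_gt0 i; move: (rho * P i i) => a; nra.
Qed.

Lemma apcg_yE h j : apcg_y h j 0 = (x h j 0 + rho * v h j 0) / (1 + rho).
Proof. by rewrite /apcg_y !mxE mulrC. Qed.

Lemma apcg_wE h j : apcg_w h j 0 = (1 - rho) * v h j 0 + rho * apcg_y h j 0.
Proof. by rewrite /apcg_w [LHS]mxE [X in X + _]mxE [X in _ + X]mxE. Qed.

Lemma v_rcons h i : v (rcons h i) = apcg_w h + apcg_delta h i *: evec R i.
Proof.
apply/matrixP => j k; rewrite (ord1 k) add_evecE /apcg_delta.
have [->|ji] := eqVneq j i; first by rewrite mulr1 addrC subrK.
by rewrite mulr0 addr0 v_other.
Qed.

Lemma x_rcons h i :
  x (rcons h i) = apcg_y h + (rho * P i i / p i * apcg_delta h i) *: evec R i.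
Proof. by rewrite x_step v_rcons addrAC subrr add0r scalerA. Qed.

(* The optimality condition of the proximal step, written so as to cover
   both the case [P i i = 1] and the case [psi i = 0]. *)
Lemma prox_three_point h i :
  (sigma * p i * apcg_delta h i + rho * g (apcg_y h) i 0)
    * ((P *m (apcg_w h - theta)) i 0 + P i i * apcg_delta h i)
  + rho * psi i (v (rcons h i) i 0) <= rho * psi i (theta i 0).
Proof.
set q := v (rcons h i) i 0; set delta := apcg_delta h i; set gi := g (apcg_y h) i 0.
have eta_gt0 : 0 < apcg_eta i by rewrite divr_gt0 ?mulr_gt0.
have sigma_p_eta : sigma * p i * apcg_eta i = rho.
  by rewrite /apcg_eta mulrC divfK // mulf_neq0 // gt_eqF.
case: (diag1_or_psi0 i) => [Pii | psi0].
  have opt := prox_optimality eta_gt0 (psi_convex i) (v_prox h i) (theta i 0).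
  rewrite -/q in opt.
  rewrite proj_diag1_mulmx // Pii mul1r [X in _ * (X + _)]mxE [X in _ * (_ + X + _)]mxE.
  have e : rho * ((theta i 0 - q) * (q - (apcg_w h i 0 - apcg_eta i * gi)) / apcg_eta i)
      = - ((sigma * p i * delta + rho * gi) * (apcg_w h i 0 - theta i 0 + delta)).
    by rewrite /delta /apcg_delta -/q -sigma_p_eta; field; rewrite gt_eqF.
  have := ler_wpM2l (ltW rho_gt0) opt; rewrite mulrDr e; lra.
have q_eq : q = apcg_w h i 0 - apcg_eta i * gi.
  by apply: (prox0_eq eta_gt0); rewrite -psi0; exact: v_prox.
have -> : sigma * p i * delta + rho * gi = 0.
  by rewrite /delta /apcg_delta -/q q_eq -sigma_p_eta /gi; ring.
by rewrite psi0 mul0r add0r mulr0.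
Qed.

Lemma descent_step h i :
  p i * (sigma * sqnormP P (v (rcons h i) - theta) + 2 * f (x (rcons h i)))
  <= p i * (sigma * sqnormP P (apcg_w h - theta) + 2 * f (apcg_y h))
     + 2 * rho * (psi i (theta i 0) - g (apcg_y h) i 0 * (P *m (apcg_w h - theta)) i 0
                  - psi i (v (rcons h i) i 0)).
Proof.
have three := prox_three_point h i.
set q := v (rcons h i) i 0 in three *; set delta := apcg_delta h i in three *.
set Q := (P *m (apcg_w h - theta)) i 0 in three *; set gi := g (apcg_y h) i 0 in three *.
have pi_gt0 := p_gt0 i.
have sqE : sqnormP P (v (rcons h i) - theta)
    = sqnormP P (apcg_w h - theta) + 2 * delta * Q + delta ^+ 2 * P i i.
  by rewrite v_rcons addrAC sqnormP_add_evec.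
have descent : f (x (rcons h i)) <= f (apcg_y h) + rho * P i i / p i * delta * gi
    + M i * (rho * P i i / p i * delta) ^+ 2 / 2.
  by rewrite x_rcons; apply: (coord_descent P_sym P_idem f_strong g_range (ltW sigma_gt0)).
have curvature : p i * (M i * (rho * P i i / p i * delta) ^+ 2)
    <= sigma * p i * P i i * delta ^+ 2.
  have e1 : p i * (M i * (rho * P i i / p i * delta) ^+ 2)
      = rho ^+ 2 * (M i * P i i) * (P i i * delta ^+ 2 / p i).
    by field; rewrite gt_eqF.
  have e2 : sigma * p i * P i i * delta ^+ 2
      = sigma * p i ^+ 2 * (P i i * delta ^+ 2 / p i).
    by field; rewrite gt_eqF.
  rewrite e1 e2 ler_wpM2r ?rho_bound //.
  by rewrite divr_ge0 ?(ltW pi_gt0) // mulr_ge0 ?sqr_ge0 // proj_diag_ge0.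
have e3 : p i * (rho * P i i / p i * delta * gi) = rho * P i i * delta * gi.
  by field; rewrite gt_eqF.
have descent' := ler_wpM2l (ltW pi_gt0) descent.
rewrite sqE; move: three curvature descent' e3; clearbody q delta Q gi.
set K := M i * _; rewrite !mulrDr => three curvature descent' e3.
rewrite e3 mulrA in descent'; move: three curvature descent'.
set Fx := f _; set Fy := f _; set Sq := sqnormP _ _.
set pq := psi i q; set pt := psi i _; set Pii := P i i.
clearbody K Fx Fy Sq pq pt Pii; nra.
Qed.

Definition apcg_a j := rho / p j.
Definition apcg_c j := (1 - apcg_a j * rho) / (1 + rho).

(* Where [P j j = 1], each [x h j 0] is [a_j v h j 0 + (1 - a_j) u] for a
   convex combination [u] of past [v]'s, updated as [u' = c_j u + (1 - c_j) v_j];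
   [psi_hist h j] follows the same recursion and bounds [(1 - a_j) psi_j u]. *)
Fixpoint psi_hist_rev (r : seq 'I_d) j : R :=
  if r is _ :: r' then
    (1 - apcg_a j) * (1 - apcg_c j) * psi j (v (rev r') j 0) + apcg_c j * psi_hist_rev r' j
  else (1 - apcg_a j) * psi j 0.

Definition psi_hist h j := psi_hist_rev (rev h) j.
Definition psi_hat h j := apcg_a j * psi j (v h j 0) + psi_hist h j.

Lemma psi_hist_rcons h i j : psi_hist (rcons h i) j
  = (1 - apcg_a j) * (1 - apcg_c j) * psi j (v h j 0) + apcg_c j * psi_hist h j.
Proof. by rewrite /psi_hist rev_rcons /= revK. Qed.

Lemma psi_hist_psi0 h j : psi j = (fun _ => 0) -> psi_hist h j = 0.
Proof.
move=> psi0; elim/last_ind: h => [|h i IH]; first by rewrite /psi_hist /= psi0 mulr0.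
by rewrite psi_hist_rcons IH psi0 !mulr0 addr0.
Qed.

Lemma apcg_a_ge0 j : 0 <= apcg_a j.
Proof. by rewrite divr_ge0 ?ltW. Qed.

Lemma apcg_a_le1 j : P j j = 1 -> apcg_a j <= 1.
Proof. by move=> Pj; rewrite ler_pdivrMr // mul1r -[rho]mulr1 -Pj rho_diag_le_p. Qed.

Lemma apcg_c_ge0 j : P j j = 1 -> 0 <= apcg_c j.
Proof.
move=> Pj; apply: divr_ge0; last by rewrite addr_ge0 // ltW.
rewrite subr_ge0 -[1]mulr1; apply: ler_pM; rewrite ?apcg_a_ge0 ?apcg_a_le1 //.
  exact: ltW.
exact: ltW.
Qed.

Lemma apcg_c_le1 j : apcg_c j <= 1.
Proof.
rewrite ler_pdivrMr ?addr_gt0 // mul1r lerD2l.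
have := rho_gt0; have := mulr_ge0 (apcg_a_ge0 j) (ltW rho_gt0).
move: (apcg_a j * rho) => ar; lra.
Qed.

Lemma x_convex_comb h j : P j j = 1 -> exists u,
  x h j 0 = apcg_a j * v h j 0 + (1 - apcg_a j) * u
  /\ (1 - apcg_a j) * psi j u <= psi_hist h j.
Proof.
move=> Pj; elim/last_ind: h => [|h i [u [xu psi_u]]].
  by exists 0; rewrite x_nil v_nil !mxE mulr0 mulr0 add0r /psi_hist /=.
have rho1_neq0 : 1 + rho != 0 by rewrite gt_eqF ?addr_gt0.
have xE : x (rcons h i) j 0 - apcg_a j * v (rcons h i) j 0
    = apcg_y h j 0 - apcg_a j * apcg_w h j 0.
  rewrite x_rcons add_evecE; have [<-|ji] := eqVneq j i.
    by rewrite Pj /apcg_delta /apcg_a (_ : true%:R = 1) // mulr1; field; rewrite gt_eqF.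
  by rewrite (_ : false%:R = 0) // mulr0 addr0 v_other.
exists (apcg_c j * u + (1 - apcg_c j) * v h j 0); split.
  rewrite -[LHS](subrK (apcg_a j * v (rcons h i) j 0)) xE addrC; congr (_ + _).
  by rewrite apcg_wE apcg_yE xu /apcg_c; field.
rewrite psi_hist_rcons.
have cvx := @psi_convex j u (v h j 0) (apcg_c j).
rewrite apcg_c_ge0 // apcg_c_le1 in cvx; have {}cvx := cvx isT.
have a_le1 : 0 <= 1 - apcg_a j by rewrite subr_ge0 apcg_a_le1.
have := apcg_c_ge0 Pj; move: a_le1 cvx psi_u.
set U := psi j (_ + _); set pu := psi j u; set pv := psi j (v h j 0).
move: (psi_hist h j) (apcg_a j) (apcg_c j) => W a c; nra.
Qed.

Lemma psi_le_psi_hat h j : psi j (x h j 0) <= psi_hat h j.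
Proof.
case: (diag1_or_psi0 j) => [Pj | psi0]; last by rewrite /psi_hat psi_hist_psi0 // psi0 mulr0 addr0.
have [u [-> psi_u]] := x_convex_comb h Pj.
have cvx := @psi_convex j (v h j 0) u (apcg_a j).
rewrite apcg_a_ge0 apcg_a_le1 // in cvx; have {}cvx := cvx isT.
rewrite /psi_hat; lra.
Qed.

Lemma p_le1 i : p i <= 1.
Proof.
rewrite -p_sum1 (bigD1 i) //= lerDl.
by apply: sumr_ge0 => k _; exact: ltW.
Qed.

Lemma sum_psi_hat_rcons h j : \sum_i p i * psi_hat (rcons h i) j
  = rho * psi j (v (rcons h j) j 0) + (apcg_a j - rho) * psi j (apcg_w h j 0)
    + ((1 - apcg_a j) * (1 - apcg_c j) * psi j (v h j 0) + apcg_c j * psi_hist h j).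
Proof.
rewrite /psi_hat; under eq_bigr do rewrite psi_hist_rcons.
rewrite (bigD1 j) //=.
under [in X in _ + X = _]eq_bigr => i ij do rewrite v_other 1?eq_sym //.
rewrite -big_distrl /=.
have -> : \sum_(i < d | i != j) p i = 1 - p j.
  by move: p_sum1; rewrite (bigD1 j) //= => <-; rewrite addrAC subrr add0r.
have ap : apcg_a j * p j = rho by rewrite /apcg_a divfK // gt_eqF.
rewrite -ap; ring.
Qed.

Lemma psi_hat_coord_step h j : \sum_i p i * psi_hat (rcons h i) j
  <= (1 - rho) * psi_hat h j + rho * psi j (v (rcons h j) j 0).
Proof.
have rho1_neq0 : 1 + rho != 0 by rewrite gt_eqF ?addr_gt0.
rewrite sum_psi_hat_rcons /psi_hat.
case: (diag1_or_psi0 j) => [Pj | psi0];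
  last by rewrite (psi_hist_psi0 h psi0) psi0 /= !(mulr0, addr0).
have [u [xu psi_u]] := x_convex_comb h Pj.
pose lam := rho * (1 - apcg_a j) / (1 + rho).
have wE : apcg_w h j 0 = lam * u + (1 - lam) * v h j 0.
  by rewrite apcg_wE apcg_yE xu /lam; field.
have lam01 : 0 <= lam <= 1.
  apply/andP; split.
    by rewrite divr_ge0 ?mulr_ge0 ?subr_ge0 ?apcg_a_le1 ?addr_ge0 ?ltW.
  rewrite ler_pdivrMr ?addr_gt0 // mul1r.
  have := apcg_a_ge0 j; have := rho_gt0; move: (apcg_a j) => a; nra.
have cvx := @psi_convex j u (v h j 0) lam lam01; rewrite -wE in cvx.
have a_rho : 0 <= apcg_a j - rho.
  by rewrite subr_ge0 /apcg_a ler_pdivlMr // ger_pMr // p_le1.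
have hist : (apcg_a j - rho) * (lam * psi j u)
    <= (apcg_a j - rho) * rho / (1 + rho) * psi_hist h j.
  have -> : (apcg_a j - rho) * (lam * psi j u)
      = (apcg_a j - rho) * rho / (1 + rho) * ((1 - apcg_a j) * psi j u).
    by rewrite /lam; field.
  apply: ler_wpM2l psi_u.
  by rewrite divr_ge0 ?mulr_ge0 // ?addr_ge0 // ltW.
have := ler_wpM2l a_rho cvx; rewrite mulrDr; move: hist.
rewrite /apcg_c /lam; set pu := psi j u; set pv := psi j (v h j 0).
move: (apcg_a j) (psi_hist h j) => a W; set pw := psi j _; set pv' := psi j _.
clearbody pu pv pw pv'.
have -> : (1 - rho) * (a * pv + W) + rho * pv'
    = rho * pv' + (a - rho) * ((1 - rho * (1 - a) / (1 + rho)) * pv)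
      + (1 - a) * (1 - (1 - a * rho) / (1 + rho)) * pv
      + ((a - rho) * rho / (1 + rho) * W + (1 - a * rho) / (1 + rho) * W).
  by field.
lra.
Qed.

Lemma sum_psi_hat_step h : \sum_i p i * \sum_j psi_hat (rcons h i) j
  <= (1 - rho) * \sum_j psi_hat h j + rho * \sum_j psi j (v (rcons h j) j 0).
Proof.
under eq_bigr do rewrite big_distrr; rewrite exchange_big /= !big_distrr -big_split.
by apply: ler_sum => j _; exact: psi_hat_coord_step.
Qed.

Lemma apcg_w_sub h :
  apcg_w h - theta = (1 - rho) *: (v h - theta) + rho *: (apcg_y h - theta).
Proof. by rewrite /apcg_w !scalerBr addrACA -opprD -scalerDl subrK scale1r. Qed.

Lemma apcg_balance h :
  (1 - rho) *: (x h - apcg_y h) + rho *: (theta - apcg_y h) + rho *: (apcg_w h - theta) = 0.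
Proof.
have rho1_neq0 : 1 + rho != 0 by rewrite gt_eqF ?addr_gt0.
apply/matrixP => j k; rewrite (ord1 k) !mxE.
by field.
Qed.

(* Strong convexity of [f] at [y] towards [x] (weight [1 - rho]) and towards
   [theta] (weight [rho]), combined through [apcg_balance]. *)
Lemma coupling_ineq h :
  sigma * sqnormP P (apcg_w h - theta) + 2 * f (apcg_y h)
    - 2 * rho * ((g (apcg_y h))^T *m P *m (apcg_w h - theta)) 0 0
  <= (1 - rho) * (sigma * sqnormP P (v h - theta) + 2 * f (x h)) + 2 * rho * f theta.
Proof.
set y := apcg_y h; set G := (g y)^T *m P.
have lin : (1 - rho) * (G *m (x h - y)) 0 0 + rho * (G *m (theta - y)) 0 0
    + rho * (G *m (apcg_w h - theta)) 0 0 = 0.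
  by rewrite -mulmx_comb3_entry apcg_balance mulmx0 mxE.
have sc_theta := f_strong theta y.
have sc_x := f_strong (x h) y.
have cvx := sqnormP_convex P_sym P_idem (v h - theta) (y - theta) rho01.
rewrite -apcg_w_sub in cvx.
rewrite -sqnormPN opprB in sc_theta.
have := ler_wpM2l (ltW rho_gt0) sc_theta.
have := ler_wpM2l (ltW rho1_gt0) sc_x.
have := ler_wpM2l (ltW sigma_gt0) cvx.
have : 0 <= (1 - rho) * (sigma / 2 * sqnormP P (x h - y)).
  by rewrite !mulr_ge0 ?divr_ge0 ?sqnormP_ge0 ?subr_ge0 ?ltW.
move: lin; rewrite /G.
set Lx := (_ *m (x h - y)) 0 0; set Lt := (_ *m (theta - y)) 0 0.
set Lw := (_ *m (apcg_w h - theta)) 0 0.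
move: (sqnormP P (v h - theta)) (sqnormP P (y - theta)) (sqnormP P (x h - y))
  (sqnormP P (apcg_w h - theta)) (f theta) (f y) (f (x h)) => Qv Qy Qx Qw Ft Fy Fx.
clearbody Lx Lt Lw; lra.
Qed.

Definition apcg_potential h := sigma * sqnormP P (v h - theta)
  + 2 * (f (x h) + \sum_j psi_hat h j - Fobj f psi theta).

Lemma apcg_potential_step h :
  \sum_i p i * apcg_potential (rcons h i) <= (1 - rho) * apcg_potential h.
Proof.
set K := sigma * sqnormP P (apcg_w h - theta) + 2 * f (apcg_y h).
set Ft := Fobj f psi theta.
have per i : p i * apcg_potential (rcons h i)
    <= p i * (K - 2 * Ft)
       + 2 * rho * (psi i (theta i 0)
                    - g (apcg_y h) i 0 * (P *m (apcg_w h - theta)) i 0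
                    - psi i (v (rcons h i) i 0))
       + 2 * (p i * \sum_j psi_hat (rcons h i) j).
  have := descent_step h i; rewrite /apcg_potential /K -/Ft.
  move: (sqnormP _ _) (f (x _)) (\sum_j _) (psi i _) (psi i (v _ i 0)) => A B C D E.
  move: (_ * (P *m _) i 0) (sqnormP _ _) (f _) Ft => G A' B' F; nra.
apply: le_trans (ler_sum _ (fun i _ => per i)) _.
rewrite !big_split /= -!big_distrl -!big_distrr /= p_sum1 mul1r !sumrB.
rewrite -trmx_mulmx_entry mulmxA.
have := sum_psi_hat_step h; have := coupling_ineq h.
rewrite /apcg_potential /K /Ft /Fobj.
move: (sqnormP P (apcg_w h - theta)) (sqnormP P (v h - theta)) => Qw Qv.
move: (f (apcg_y h)) (f (x h)) (f theta) => Fy Fx Ftheta.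
move: (((g _)^T *m P *m _) 0 0) => L.
move: (\sum_(i < d) psi i (theta i 0)) (\sum_(i < d) psi i (v (rcons h i) i 0)) => St Sv.
move: (\sum_i p i * _) (\sum_j psi_hat h j) => Hn Ho.
lra.
Qed.

Lemma Exp_apcg_potential t : Exp p t apcg_potential <= (1 - rho) ^+ t * apcg_potential [::].
Proof.
exact: (Exp_contraction (fun i => ltW (p_gt0 i)) (ltW rho1_gt0) apcg_potential_step).
Qed.

Lemma apcg_potential_nil :
  apcg_potential [::] = sigma * sqnormP P (v [::] - theta)
                        + 2 * (Fobj f psi (x [::]) - Fobj f psi theta).
Proof.
rewrite /apcg_potential /Fobj; congr (_ + 2 * (_ + _ - _)).
apply: eq_bigr => j _.
by rewrite /psi_hat /psi_hist /= x_nil v_nil !mxE; ring.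
Qed.

Lemma apcg_convergence t :
  sigma * Exp p t (fun h => sqnormP P (v h - theta))
  + 2 * (Exp p t (fun h => Fobj f psi (x h)) - Fobj f psi theta)
  <= (sigma * sqnorm (v [::] - theta) + 2 * (Fobj f psi (x [::]) - Fobj f psi theta))
     * (1 - rho) ^+ t.
Proof.
have p_ge0 i : 0 <= p i by exact: ltW.
rewrite mulrBr addrA -(Exp_affine p_sum1).
apply: (@le_trans _ _ (Exp p t apcg_potential)).
  apply: (ler_Exp p_ge0) => h.
  rewrite /apcg_potential mulrBr addrA lerD2r lerD2l ler_pM2l // /Fobj lerD2l.
  by apply: ler_sum => j _; exact: psi_le_psi_hat.
rewrite mulrC; apply: le_trans (Exp_apcg_potential t) _.
apply: ler_wpM2l; first exact/exprn_ge0/ltW.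
rewrite apcg_potential_nil lerD2r ler_pM2l //; exact: sqnormP_le_sqnorm.
Qed.

End ConstantStepAPCG.

(* With [alpha = beta = rho], [A_t = (1 - rho)^-t] and [B_t = sigma A_t], the
   step size [a_{t+1} / (B_{t+1} p_i)] is the constant [rho / (sigma p_i)]. *)
Lemma apcg_iterates_constant (R : realType) (d : nat) (P : 'M[R]_d)
    (g : 'cV[R]_d -> 'cV[R]_d) (psi : 'I_d -> R -> R) (sigma rho : R)
    (p : 'I_d -> R) (x v : seq 'I_d -> 'cV[R]_d) :
  0 < sigma -> 0 < rho -> rho < 1 -> (forall i, 0 < p i) ->
  apcg_iterates (fun _ => rho) (fun _ => rho) (fun t => (1 - rho) ^- t)
    (fun t => sigma * (1 - rho) ^- t) p P g psi x v ->
  [/\ x [::] = 0, v [::] = 0,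
      forall h i, is_prox (apcg_eta sigma rho p i) (psi i)
        (apcg_w rho x v h i 0 - apcg_eta sigma rho p i * g (apcg_y rho x v h) i 0)
        (v (rcons h i) i 0),
      forall h i j, j != i -> v (rcons h i) j 0 = apcg_w rho x v h j 0 &
      forall h i, x (rcons h i)
        = apcg_y rho x v h + (rho * P i i / p i) *: (v (rcons h i) - apcg_w rho x v h)].
Proof.
move=> sigma_gt0 rho_gt0 rho_lt1 p_gt0 [x_nil [v_nil step]].
have rho1_neq0 : 1 - rho != 0 by rewrite subr_eq0 eq_sym lt_eqF.
have rho1'_neq0 : 1 + rho != 0 by rewrite gt_eqF ?addr_gt0.
have yE h : (1 - rho * rho)^-1 *: ((1 - rho) *: x h + (rho * (1 - rho)) *: v h)
    = apcg_y rho x v h.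
  rewrite (_ : _ + _ = (1 - rho) *: (x h + rho *: v h)); last first.
    by rewrite scalerDr scalerA mulrC.
  rewrite scalerA /apcg_y; congr (_ *: _).
  rewrite (_ : 1 - rho * rho = (1 - rho) * (1 + rho)); last by ring.
  by field; rewrite rho1_neq0 rho1'_neq0.
have etaE h i : ((1 - rho) ^- (size h).+1 - (1 - rho) ^- size h)
    / (sigma * (1 - rho) ^- (size h).+1 * p i) = apcg_eta sigma rho p i.
  rewrite /apcg_eta exprS; move: ((1 - rho) ^+ size h) (expf_neq0 (size h) rho1_neq0) => q q_neq0.
  by field; rewrite q_neq0 rho1_neq0 !gt_eqF.
have zE h i j : ((1 - rho) *: v h + rho *: apcg_y rho x v h
    - apcg_eta sigma rho p i *: coord_grad g i (apcg_y rho x v h)) j 0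
    = apcg_w rho x v h j 0 - apcg_eta sigma rho p i * ((j == i)%:R * g (apcg_y rho x v h) i 0).
  by rewrite [LHS]mxE; congr (_ + _); rewrite mxE [X in - X]mxE coord_gradE.
have v_other h i j : j != i -> v (rcons h i) j 0 = apcg_w rho x v h j 0.
  move=> ji; have [_ other _] := step h i.
  by rewrite other //= yE etaE zE (negbTE ji) mul0r mulr0 subr0.
split => // [h i | h i].
  by have [prox _ _] := step h i; move: prox; rewrite /= yE etaE zE eqxx mul1r.
by have [_ _ ->] := step h i; rewrite /= yE RdiagE -addrA -opprD.
Qed.

Theorem corollary1 (R : realType) (m d : nat)
  (A : 'M[R]_(m, d)) (Adag : 'M[R]_(d, m))
  (f : 'cV[R]_d -> R) (g : 'cV[R]_d -> 'cV[R]_d) (psi : 'I_d -> R -> R)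
  (sigmaA S : R) (M p : 'I_d -> R) (theta : 'cV[R]_d)
  (x v : seq 'I_d -> 'cV[R]_d) :
  is_pinv A Adag ->
  (forall i, convex_fun (psi i)) ->
  (forall y : 'cV[R]_d, differentiable f y /\
     forall u : 'cV[R]_d, 'd f y u = ((g y)^T *m u) 0 0) ->
  (forall x1 y1 : 'cV[R]_d,
     f x1 - f y1 >= ((g y1)^T *m (Adag *m A) *m (x1 - y1)) 0 0
                    + sigmaA / 2 * sqnormP (Adag *m A) (x1 - y1)) ->
  (forall (i : 'I_d) (y : 'cV[R]_d) (s : R),
     `|(g (y + s *: evec R i)) i 0 - (g y) i 0| <= M i * `|s|) ->
  (forall i, Rdiag (Adag *m A) i = 1 \/ psi i = (fun _ => 0)) ->
  (forall i, 0 < p i) -> \sum_(i < d) p i = 1 ->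
  (forall y, Fobj f psi theta <= Fobj f psi y) ->
  0 < sigmaA -> 0 < S ->
  (forall i, M i * Rdiag (Adag *m A) i / p i ^+ 2 <= S ^+ 2) ->
  let rho := Num.sqrt sigmaA / S in
  rho < 1 ->
  let alpha := fun _ : nat => rho in
  let beta := fun _ : nat => rho in
  let As := fun t : nat => (1 - rho) ^- t in
  let Bs := fun t : nat => sigmaA * As t in
  apcg_iterates alpha beta As Bs p (Adag *m A) g psi x v ->
  (forall (i : 'I_d) (t : nat), 0 <= 1 - alpha t * Rdiag (Adag *m A) i / p i) /\
  (forall t : nat,
     sigmaA * Exp p t (fun h => sqnormP (Adag *m A) (v h - theta))
     + 2 * (Exp p t (fun h => Fobj f psi (x h)) - Fobj f psi theta)
     <= (Bs 0%N * sqnorm (v [::] - theta)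
         + 2 * As 0%N * (Fobj f psi (x [::]) - Fobj f psi theta)) * (1 - rho) ^+ t).
Proof.
move=> pinv psi_cvx f_diff f_strong g_lip diag1_or_psi0 p_gt0 p_sum1 _ sigma_gt0 S_gt0
  S_bound rho rho_lt1 alpha beta As Bs iter.
set P := Adag *m A in f_strong diag1_or_psi0 S_bound iter *.
have [_ AdagAAdag _ P_sym] := pinv.
have P_idem : P *m P = P by rewrite /P mulmxA AdagAAdag.
have g_range := grad_in_range P_sym P_idem f_strong f_diff.
have rho_gt0 : 0 < rho by rewrite divr_gt0 ?sqrtr_gt0.
have rhoS : rho ^+ 2 * S ^+ 2 = sigmaA.
  by rewrite /rho expr_div_n sqr_sqrtr ?ltW // divfK // expf_neq0 // gt_eqF.
have rho_bound i : rho ^+ 2 * (M i * P i i) <= sigmaA * p i ^+ 2.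
  have := S_bound i; rewrite RdiagE ler_pdivrMr ?exprn_gt0 // => le_MP.
  by rewrite -rhoS -(mulrA (rho ^+ 2)) ler_wpM2l ?sqr_ge0.
have [x_nil v_nil v_prox v_other x_step] :=
  apcg_iterates_constant sigma_gt0 rho_gt0 rho_lt1 p_gt0 iter.
split => [i t | t].
  rewrite /alpha RdiagE subr_ge0 ler_pdivrMr // mul1r.
  exact: (rho_diag_le_p P_sym P_idem f_strong g_range g_lip p_gt0 sigma_gt0 rho_gt0 rho_bound).
rewrite /Bs /As expr0 invr1 !mulr1.
have diag1_or_psi0' i : P i i = 1 \/ psi i = (fun _ => 0) by rewrite -RdiagE.
exact: (apcg_convergence theta P_sym P_idem psi_cvx f_strong g_range g_lip diag1_or_psi0'
  p_gt0 p_sum1 sigma_gt0 rho_gt0 rho_lt1 rho_bound x_nil v_nil v_prox v_other x_step).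
Qed.
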